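(* Let $\alpha\neq\beta$, let $(g_n)$ be as in the context, and let $x$ be a complex number (or indeterminate) with $x\neq\alpha$. Put $G(t)=\sum_{n\ge0}(\alpha-\beta)^{n-1}g_n(x)t^n$. Then, as formal power series in $t$, $$G(t)=\frac{1+t(x-\beta)(\alpha-\beta)-\sqrt{1-2t(x-\beta)(\alpha+\beta)+t^2(x-\beta)^2(\alpha-\beta)^2}+\dfrac{2(x-\alpha)}{\alpha-\beta}}{2\bigl(x-\alpha+xt(\alpha-\beta)^2\bigr)},$$ where the square root denotes the formal power series with constant term $1$.
   Context: Fix complex numbers $\alpha\neq\beta$. Define polynomials $g_n(x)\in\mathbb{C}[x]$ recursively by $g_0(x)=1$ and, for $n\ge1$, $$(x-\alpha)(\alpha-\beta)^{n-1}g_n(x)=\alpha(x-\beta)^n g_{n-1}(\alpha)-x(\alpha-\beta)^n g_{n-1}(x).$$ (The right-hand side vanishes at $x=\alpha$, so it is divisible by $x-\alpha$ and $g_n$ is a uniquely determined polynomial.) *)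

From HB Require Import structures.
From mathcomp Require Import all_boot all_order all_algebra.
From mathcomp Require Import complex.
Set Implicit Arguments. Unset Strict Implicit. Unset Printing Implicit Defensive.
Import Order.TTheory GRing.Theory Num.Theory.
Local Open Scope ring_scope.

Definition fps (C : Type) := nat -> C.

Definition fps_mul (C : pzRingType) (f g : fps C) : fps C :=
  fun n => \sum_(i < n.+1) f i * g (n - i)%N.

Definition fps_of_poly (C : nzRingType) (p : {poly C}) : fps C := fun n => p`_n.

From HB Require Import structures.
From mathcomp Require Import all_boot all_order all_algebra.
From mathcomp Require Import complex ring.
From Stdlib Require Import FunctionalExtensionality.
Import Order.TTheory GRing.Theory Num.Theory.
Local Open Scope ring_scope.

(* Evaluating the recurrence at x shows that the coefficient of t^(n+1) in D G
   is 2 alpha g_n(alpha) (x - beta)^(n+1).  After the rescaling t -> (x - beta) t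
   the identity therefore says that S = 1 + (alpha - beta) t - 2 alpha C, where
   C(t) = sum_n g_n(alpha) t^(n+1), is the square root of
   1 - 2 (alpha + beta) t + (alpha - beta)^2 t^2, i.e. that
   alpha C^2 = (1 + (alpha - beta) t) C - t.
   This is the kernel method: T(X, t) = sum_n (alpha - beta)^n g_n(X) t^n satisfies
   (X - alpha + X (alpha - beta)^2 t) T = X - alpha + alpha (alpha - beta) C((X - beta) t),
   so substituting the root X = alpha / (1 + (alpha - beta)^2 t) of the kernel
   gives C(W) explicitly at W = (X - beta) t; the quadratic equation holds at W,
   hence for C itself because W = (alpha - beta) t + O(t^2) with alpha != beta.
   Series are handled as polynomials truncated at an arbitrary degree N. *)

Lemma eq_from_lincomb {R : comPzRingType} {l r x y : R} :
  l = r -> forall k, x - y = k * (l - r) -> x = y.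
Proof. by move=> -> k /eqP; rewrite subrr mulr0 subr_eq0 => /eqP. Qed.

Lemma eq_from_lincomb2 {R : comPzRingType} {l1 r1 l2 r2 x y : R} :
  l1 = r1 -> l2 = r2 -> forall k1 k2,
  x - y = k1 * (l1 - r1) + k2 * (l2 - r2) -> x = y.
Proof.
by move=> -> -> k1 k2 /eqP; rewrite !subrr !mulr0 addr0 subr_eq0 => /eqP.
Qed.

Lemma coef_eq0_of_comp_XM {F : idomainType} {P U Q : {poly F}} {K : nat} :
  U`_0 != 0 -> P \Po ('X * U) = 'X^K * Q -> forall j, (j < K)%N -> P`_j = 0.
Proof.
move=> U0 PU j; elim/ltn_ind: j => j IH jK.
have Pj : P = drop_poly j P * 'X^j.
  have Pj0 : take_poly j P = 0.
    apply/polyP=> i; rewrite coef_take_poly coef0.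
    by case: ifP => // ij; apply: IH => //; apply: ltn_trans jK.
  by rewrite -{1}(poly_take_drop j P) Pj0 add0r.
have := congr1 (fun p : {poly F} => p`_j) PU.
rewrite coefXnM jK {1}Pj comp_polyM rmorphXn /= comp_polyX exprMn mulrCA.
rewrite coefXnM ltnn subnn -horner_coef0 hornerM horner_exp horner_comp.
rewrite hornerM hornerX mul0r !horner_coef0 coef_drop_poly add0n => /eqP.
by rewrite mulf_eq0 expf_eq0 (negbTE U0) andbF orbF => /eqP.
Qed.

Lemma trunc_inv_1DX {R : comNzRingType} (r : R) (N : nat) :
  exists2 I : {poly R}, I`_0 = 1 &
    (1 + r%:P * 'X) * I = 1 - 'X^(N.+1) * (- r%:P) ^+ N.+1.
Proof.
exists (\sum_(k < N.+1) (- r%:P * 'X) ^+ k).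
  rewrite -horner_coef0 horner_sum big_ord_recl big1 => [|i _].
    by rewrite expr0 hornerC addr0.
  by rewrite horner_exp hornerM hornerX mulr0 expr0n.
have := subrX1 (- r%:P * 'X) N.+1; rewrite exprMn mulrC => H.
by apply: (eq_from_lincomb H 1); ring.
Qed.

Lemma fps_sqrt_unique {F : idomainType} (f s : fps F) : 2%:R != 0 :> F ->
  f 0%N = 1 -> s 0%N = 1 -> fps_mul f f =1 fps_mul s s -> f =1 s.
Proof.
move=> n2 f0 s0 ff_ss n; elim/ltn_ind: n => -[|m] IH; first by rewrite f0 s0.
have := ff_ss m.+1; rewrite /fps_mul big_ord_recl [RHS]big_ord_recl.
rewrite big_ord_recr [in RHS]big_ord_recr /= !subn0 !subnn f0 s0.
rewrite (eq_bigr (fun i : 'I_m => s (bump 0 i) * s (m.+1 - bump 0 i)%N)).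
  rewrite /bump /= add1n => E.
  have : (f m.+1 - s m.+1) * 2%:R = 0 by apply: (eq_from_lincomb E 1); ring.
  by move/eqP; rewrite mulf_eq0 (negbTE n2) orbF subr_eq0 => /eqP.
move=> i _; rewrite /bump /= add1n !IH ?ltnS //.
by rewrite subSS (leq_trans (leq_subr _ _)).
Qed.

Lemma fps_mul_scale {C : comPzRingType} (u : C) (f h : fps C) (n : nat) :
  fps_mul (fun k => u ^+ k * f k) (fun k => u ^+ k * h k) n = u ^+ n * fps_mul f h n.
Proof.
rewrite /fps_mul mulr_sumr; apply: eq_bigr => i _.
by rewrite mulrACA -exprD subnKC // -ltnS.
Qed.

Lemma fps_mul_linear_poly0 {C : nzRingType} (p0 p1 : C) (f : fps C) :
  fps_mul (fps_of_poly (p0%:P + p1 *: 'X)) f 0%N = p0 * f 0%N.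
Proof.
by rewrite /fps_mul big_ord1 /fps_of_poly coefD coefC coefZ coefX mulr0 addr0.
Qed.

Lemma fps_mul_linear_polyS {C : nzRingType} (p0 p1 : C) (f : fps C) (n : nat) :
  fps_mul (fps_of_poly (p0%:P + p1 *: 'X)) f n.+1 = p0 * f n.+1 + p1 * f n.
Proof.
rewrite /fps_mul !big_ord_recl big1 => [|i _]; last first.
  by rewrite /fps_of_poly coefD coefC coefZ coefX mulr0 addr0 mul0r.
rewrite /fps_of_poly !(coefD, coefC, coefZ, coefX) /= subn0 subSS subn0.
by rewrite mulr0 mulr1 !addr0 add0r.
Qed.

Section KernelMethod.

Context {F : fieldType} (a b : F) (c : nat -> F) (g : nat -> {poly F}).
Hypothesis g0 : g 0%N = 1.
Hypothesis g_rec : forall n,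
  ('X - a%:P) * ((a - b) ^+ n)%:P * g n.+1 =
  (a * c n)%:P * ('X - b%:P) ^+ n.+1 - 'X * ((a - b) ^+ n.+1)%:P * g n.

Lemma truncated_kernel_eq (xi : {poly F}) (N : nat) :
  (xi - a%:P + xi * ((a - b) ^+ 2)%:P * 'X) *
    (\sum_(n < N.+1) ((a - b) ^+ n)%:P * (g n \Po xi) * 'X^n) =
  xi - a%:P + (a * (a - b))%:P * \sum_(n < N) (c n)%:P * ((xi - b%:P) * 'X) ^+ n.+1
  + 'X^(N.+1) * (xi * ((a - b) ^+ 2)%:P * ((a - b) ^+ N)%:P * (g N \Po xi)).
Proof.
set d := a - b.
have rec_xi n : (xi - a%:P) * (d ^+ n)%:P * (g n.+1 \Po xi) =
    (a * c n)%:P * (xi - b%:P) ^+ n.+1 - xi * (d ^+ n.+1)%:P * (g n \Po xi).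
  have := congr1 (comp_poly xi) (g_rec n).
  by rewrite !(rmorphB, rmorphM, rmorphXn) /= !comp_polyX !comp_polyC.
elim: N => [|N IH].
  by rewrite big_ord1 big_ord0 g0 comp_polyC expr0 mulr0 addr0 expr1; ring.
rewrite big_ord_recr /= mulrDr IH big_ord_recr /=.
apply: (eq_from_lincomb (rec_xi N) (d%:P * 'X^(N.+1))).
by rewrite !exprMn !exprS !polyCM; ring.
Qed.

Definition shifted_gf (N : nat) : {poly F} :=
  \poly_(i < N.+1) (if i is j.+1 then c j else 0).

Lemma shifted_gf_comp (N : nat) (W : {poly F}) :
  shifted_gf N \Po W = \sum_(n < N) (c n)%:P * W ^+ n.+1.
Proof.
rewrite /shifted_gf poly_def rmorph_sum big_ord_recl /= scale0r rmorph0 add0r.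
by apply: eq_bigr => i _; rewrite comp_polyZ rmorphXn /= comp_polyX mul_polyC.
Qed.

Definition quad_defect (N : nat) : {poly F} :=
  shifted_gf N - 'X + (a - b)%:P * 'X * shifted_gf N - a%:P * shifted_gf N ^+ 2.

Lemma quad_defect_coef (N j : nat) : a != 0 -> a != b -> (j <= N)%N ->
  (quad_defect N)`_j = 0.
Proof.
move=> a0 ab jN; have [d dE] : {d | a - b = d} by exists (a - b).
have d0 : d != 0 by rewrite -dE subr_eq0.
have bE : b = a - d by rewrite -dE subKr.
have [I I0 EI] := trunc_inv_1DX (d ^+ 2) N.
set z := 'X^(N.+1) in EI; set k := (- _) ^+ N.+1 in EI.
(* xi is the root of the kernel X - a + X d^2 t modulo t^(N+1). *)
set xi := a%:P * I; set W := (xi - b%:P) * 'X.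
have [E CW] : exists E, shifted_gf N \Po W = d%:P * 'X * I + z * E.
  have := truncated_kernel_eq xi N; rewrite -shifted_gf_comp dE -/W -/z.
  set Tp := \sum_(n < N.+1) _; set e := xi * _ * _ * _ => T.
  exists (((a * d)^-1)%:P * (a%:P * k * (1 - Tp) - e)).
  have adP0 : (a * d)%:P != 0 by rewrite polyC_eq0 mulf_neq0.
  apply: (mulfI adP0); rewrite (mulrCA z) mulrDr [_ * (_^-1%:P * _)]mulrA.
  rewrite -polyCM mulfV ?mulf_neq0 // mul1r.
  by apply: (eq_from_lincomb2 T EI (-1) (a%:P * (Tp - 1))); rewrite /xi; ring.
have defect_W : quad_defect N \Po ('X * (xi - b%:P)) =
    z * (b%:P * 'X * k + E + d%:P * W * E - 2 * a%:P * (d%:P * 'X * I) * E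
         - a%:P * z * E ^+ 2).
  rewrite mulrC -/W /quad_defect dE.
  rewrite !(rmorphB, rmorphD, rmorphM) /= comp_polyX !comp_polyC CW.
  by apply: (eq_from_lincomb EI (- (b%:P * 'X))); rewrite /W /xi bE; ring.
apply: (coef_eq0_of_comp_XM _ defect_W) => //.
by rewrite coefB coefCM I0 coefC mulr1 dE.
Qed.

Definition disc_poly (u : F) : {poly F} :=
  1 - (2 * u * (a + b)) *: 'X + (u ^+ 2 * (a - b) ^+ 2) *: 'X ^+ 2.

Lemma coef_disc_poly (u : F) (n : nat) :
  (disc_poly u)`_n = u ^+ n * (disc_poly 1)`_n.
Proof.
rewrite !(coefD, coefN, coefZ, coef1, coefX, coefXn).
by case: n => [|[|[|n]]] /=; rewrite ?expr0 ?expr1; ring.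
Qed.

Definition sqrt_series : fps F := fun n =>
  if n is m.+1 then (if m == 0%N then a - b else 0) - 2 * a * c m else 1.

Lemma sqrt_series_coef (N j : nat) : (j <= N)%N ->
  (1 + (a - b)%:P * 'X - (2 * a)%:P * shifted_gf N)`_j = sqrt_series j.
Proof.
move=> jN; rewrite !(coefB, coefD, coef1, coefCM, coefX) coef_poly ltnS jN.
by case: j jN => [|[|m]] _ /=; rewrite ?mulr0 ?mulr1 ?subr0 ?addr0 ?add0r.
Qed.

Lemma sqrt_series_sqr : a != b ->
  fps_mul sqrt_series sqrt_series =1 fps_of_poly (disc_poly 1).
Proof.
move=> ab n; set S := 1 + (a - b)%:P * 'X - (2 * a)%:P * shifted_gf n.
have SS : S * S = disc_poly 1 - (4 * a)%:P * quad_defect n.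
  by rewrite /S /disc_poly /quad_defect -!mul_polyC; ring.
have -> : fps_mul sqrt_series sqrt_series n = (S * S)`_n.
  rewrite coefM; apply: eq_bigr => i _.
  by rewrite !sqrt_series_coef // ?leq_subr // -ltnS.
rewrite SS coefB coefCM.
have [->|a0] := eqVneq a 0; first by rewrite mulr0 mul0r subr0.
by rewrite quad_defect_coef // mulr0 subr0.
Qed.

End KernelMethod.

Local Open Scope complex_scope.

Theorem mainTheorem3 (R : rcfType) (alpha beta x : R[i])
  (g : nat -> {poly R[i]}) (sq : fps R[i]) :
  alpha != beta ->
  g 0%N = 1 ->
  (forall n : nat,
     ('X - alpha%:P) * ((alpha - beta) ^+ n)%:P * g n.+1 =
     (alpha * (g n).[alpha])%:P * ('X - beta%:P) ^+ n.+1
     - 'X * ((alpha - beta) ^+ n.+1)%:P * g n) ->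
  x != alpha ->
  sq 0%N = 1 ->
  fps_mul sq sq =
    fps_of_poly (1 - (2 * (x - beta) * (alpha + beta)) *: 'X
                 + ((x - beta) ^+ 2 * (alpha - beta) ^+ 2) *: 'X ^+ 2) ->
  let G : fps R[i] := fun n => (alpha - beta) ^+ n / (alpha - beta) * (g n).[x] in
  let D : fps R[i] := fps_of_poly (2 *: ((x - alpha)%:P + (x * (alpha - beta) ^+ 2) *: 'X)) in
  let N : fps R[i] := fun n =>
     fps_of_poly (1 + ((x - beta) * (alpha - beta)) *: 'X
                  + (2 * (x - alpha) / (alpha - beta))%:P) n - sq n in
  fps_mul D G = N.
Proof.
(* x != alpha is only needed to divide by D, which the statement avoids. *)
move=> ab g0 g_rec _ sq0 sq_sqr G D N.
pose c n := (g n).[alpha]; pose S := sqrt_series alpha beta c.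
have d0 : alpha - beta != 0 by rewrite subr_eq0.
have sq_sqrt_series : sq =1 fun n => (x - beta) ^+ n * S n.
  apply: fps_sqrt_unique => [||| n]; rewrite ?pnatr_eq0 ?mulr1 //.
  rewrite sq_sqr fps_mul_scale (sqrt_series_sqr _ _ _ _ g0 g_rec ab).
  by rewrite /fps_of_poly -coef_disc_poly.
have DE : D = fps_of_poly ((2 * (x - alpha))%:P
                          + (2 * (x * (alpha - beta) ^+ 2)) *: 'X).
  by rewrite /D scalerDr scale_polyC scalerA.
apply: functional_extensionality => -[|m]; rewrite DE.
  rewrite fps_mul_linear_poly0 /N /G sq_sqrt_series g0 hornerC /fps_of_poly.
  by rewrite !(coefD, coefC, coefZ, coef1, coefX) /=; field.
have := congr1 (horner^~ x) (g_rec m).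
rewrite fps_mul_linear_polyS /N /G sq_sqrt_series /S /fps_of_poly.
rewrite !(coefD, coefC, coefZ, coef1, coefX) /=.
rewrite !(hornerD, hornerN, hornerX, hornerC, horner_exp, hornerCM, hornerM) => Hx.
by case: m Hx => [|m] Hx /=; apply: (eq_from_lincomb Hx 2); rewrite /c !exprS; field.
Qed.
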